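(* Let $X$ be a compact Hausdorff space and $\phi_1,\dots,\phi_m$ real-valued continuous functions on $X$, and let $\mathcal C(X,1,\boldsymbol\phi)$ be the set of positive scalar Borel measures $\mu$ on $X$ with $\mu(X)=1$ and $\int_X\phi_i\,d\mu=0$ for $i=1,\dots,m$. Then $\mathcal C(X,1,\boldsymbol\phi)\neq\emptyset$ if and only if for some natural number $n$ with $1\le n\le m+1$ there exist $n$ distinct points $x_1,\dots,x_n\in X$ such that $0\in\mathbb R^m$ is an interior point of the convex hull of $\{\boldsymbol\phi(x_1),\dots,\boldsymbol\phi(x_n)\}$, where $\boldsymbol\phi(x_j)=(\phi_1(x_j),\dots,\phi_m(x_j))^T$.
   Context: A vector $v$ is an interior point of the convex hull of $\{u_1,\dots,u_n\}\subset\mathbb R^m$ if $v=\sum_j\lambda_ju_j$ with $\lambda_j>0$, $\sum_j\lambda_j=1$, and the coefficients $\lambda_1,\dots,\lambda_n$ are uniquely determined by these conditions. *)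

From HB Require Import structures.
From mathcomp Require Import all_boot all_order all_algebra.
From mathcomp Require Import all_classical all_reals all_analysis.
Set Implicit Arguments. Unset Strict Implicit. Unset Printing Implicit Defensive.
Import Order.TTheory GRing.Theory Num.Theory.
Local Open Scope classical_set_scope.
Local Open Scope ring_scope.

Notation borelType X := (g_sigma_algebraType (@open X)).

Definition moment_set (R : realType) (X : ptopologicalType) (m : nat)
    (phi : 'I_m -> X -> R) : set {measure set (borelType X) -> \bar R} :=
  [set mu : {measure set (borelType X) -> \bar R} | mu setT = 1%E /\
    forall i : 'I_m, (\int[mu]_(x in [set: borelType X]) (phi i (x : X))%:E = 0)%E].

(* v is an interior point of the convex hull of {u_1,...,u_n} (vectors of R^m
   represented as functions 'I_m -> R): v = \sum_j lam_j u_j with lam_j > 0,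
   \sum_j lam_j = 1, and such lam is uniquely determined by these conditions. *)
Definition convex_coeffs (R : realFieldType) (m n : nat)
    (u : 'I_n -> 'I_m -> R) (v : 'I_m -> R) (lam : 'I_n -> R) : Prop :=
  (forall j, 0 < lam j) /\ \sum_(j < n) lam j = 1 /\
  (forall i, v i = \sum_(j < n) lam j * u j i).

Definition interior_point_convex_hull (R : realFieldType) (m n : nat)
    (u : 'I_n -> 'I_m -> R) (v : 'I_m -> R) : Prop :=
  exists lam, convex_coeffs u v lam /\
    forall lam', convex_coeffs u v lam' -> lam' = lam.

(* If 0 is a convex combination of the values phi(x_j), the same combination
   of Dirac masses lies in C(X,1,phi), and Caratheodory's argument (slide the
   weights along an affine dependence until one vanishes, and repeat) turns any
   such combination into one with unique positive weights on at most m+1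
   distinct points.  Conversely, by compactness some convex combination p of
   m+1 values of phi has minimal norm.  Caratheodory again shows that every
   point of the segment from p to any phi(x) is such a combination, so
   minimality gives |p|^2 <= <p, phi(x)> for all x; integrating against a
   measure in C(X,1,phi) yields |p|^2 <= 0, i.e. p = 0. *)

From HB Require Import structures.
From mathcomp Require Import all_boot all_order all_algebra.
From mathcomp Require Import all_classical all_reals all_analysis.
From mathcomp Require Import measurable_realfun.
From mathcomp Require Import zify ring lra.
Import Order.TTheory GRing.Theory Num.Theory numFieldNormedType.Exports.
Set Implicit Arguments. Unset Strict Implicit. Unset Printing Implicit Defensive.
Local Open Scope ring_scope.

Section Caratheodory.
Variables (R : realFieldType) (m : nat).

Definition convex_weights n (w : 'I_n -> R) : Prop :=
  (forall j, 0 <= w j) /\ \sum_j w j = 1.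

Definition affine_dependence n (u : 'I_n -> 'I_m -> R) (d : 'I_n -> R) : Prop :=
  [/\ exists j, d j != 0, \sum_j d j = 0 & forall i, \sum_j d j * u j i = 0].

Lemma sum_eq0_exists_gt0 n (d : 'I_n -> R) :
  \sum_j d j = 0 -> (exists j, d j != 0) -> exists j, 0 < d j.
Proof.
move=> d0 [j dj]; apply: contrapT => /forallNP dle0.
have Nd_ge0 k : 0 <= - d k by rewrite oppr_ge0 leNgt; apply/negP/dle0.
have := @psumr_eq0P _ _ predT _ (fun k _ => Nd_ge0 k).
by rewrite sumrN d0 oppr0 => /(_ erefl j isT) /eqP; rewrite oppr_eq0 (negPf dj).
Qed.

Lemma exists_max_step n (w d : 'I_n -> R) :
  (forall j, 0 <= w j) -> (exists j, 0 < d j) ->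
  exists t, (forall j, 0 <= w j - t * d j) /\ exists j, w j - t * d j = 0.
Proof.
move=> w_ge0 [j0 dj0].
have [j dj jmin] := @arg_minP _ _ _ j0 (fun j => 0 < d j) (fun j => w j / d j) dj0.
exists (w j / d j); split; last by exists j; rewrite mulfVK ?subrr // gt_eqF.
move=> k; have [dk|dk] := ltP 0 (d k).
  by have := jmin k dk; rewrite subr_ge0 ler_pdivlMr.
rewrite subr_ge0; apply: le_trans (w_ge0 k).
by rewrite mulr_ge0_le0 // divr_ge0 // ltW.
Qed.

Lemma affine_dependence_shift n (u : 'I_n -> 'I_m -> R) d w t :
  affine_dependence u d ->
  \sum_j (w j - t * d j) = \sum_j w j /\
  forall i, \sum_j (w j - t * d j) * u j i = \sum_j w j * u j i.
Proof.
move=> [_ d0 du]; split; first by rewrite sumrB -mulr_sumr d0 mulr0 subr0.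
move=> i; under eq_bigr do rewrite mulrBl -mulrA.
by rewrite sumrB -mulr_sumr du mulr0 subr0.
Qed.

Lemma affine_dependence_exists n (u : 'I_n -> 'I_m -> R) :
  (m.+1 < n)%N -> exists d, affine_dependence u d.
Proof.
move=> m_lt_n.
pose A : 'M[R]_(n, m.+1) :=
  \matrix_(j, c) (if unlift ord0 c is Some i then u j i else 1).
have : kermx A != 0.
  by rewrite -mxrank_eq0 mxrank_ker; have := rank_leq_col A; lia.
move: (mulmx_ker A); move: (kermx A) => M MA0 /matrix0Pn[r [c Mrc]].
have MA0c c' : \sum_j M r j * A j c' = 0.
  by have := congr1 (fun B : 'M[R]_(n, m.+1) => B r c') MA0; rewrite !mxE.
exists (fun j => M r j); split; first by exists c.
  by have := MA0c ord0; under eq_bigr do rewrite mxE unlift_none mulr1.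
by move=> i; have := MA0c (lift ord0 i); under eq_bigr do rewrite mxE liftK.
Qed.

Lemma affine_dependence_of_eq n (u : 'I_n -> 'I_m -> R) j k :
  j != k -> u j = u k -> exists d, affine_dependence u d.
Proof.
move=> /negPf jk ujk.
pose e (l j' : 'I_n) : R := (j' == l)%:R.
have sum_e l (g : 'I_n -> R) : \sum_j' e l j' * g j' = g l.
  rewrite (bigD1 l) //= /e eqxx mul1r big1 ?addr0 // => j' /negPf->.
  by rewrite mul0r.
exists (fun l => e j l - e k l); split.
- by exists j; rewrite /e eqxx jk subr0 oner_neq0.
- have sum_e1 l : \sum_j' e l j' = 1.
    by rewrite -[RHS](sum_e l (fun _ => 1)); apply: eq_bigr => j' _; rewrite mulr1.
  by rewrite sumrB !sum_e1 subrr.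
- by move=> i; under eq_bigr do rewrite mulrBl; rewrite sumrB !sum_e ujk subrr.
Qed.

Lemma affine_dependence_of_coeffs n (u : 'I_n -> 'I_m -> R) v w w' :
  convex_coeffs u v w -> convex_coeffs u v w' -> w' <> w ->
  exists d, affine_dependence u d.
Proof.
move=> [_ [w1 wv]] [_ [w'1 w'v]] w'w; exists (fun j => w j - w' j); split.
- apply: contrapT => /forallNP wEw'; apply/w'w/funext => j.
  by apply/esym/eqP; rewrite -subr_eq0; have /negP := wEw' j; rewrite negbK.
- by rewrite sumrB w1 w'1 subrr.
- by move=> i; under eq_bigr do rewrite mulrBl; rewrite sumrB -wv -w'v subrr.
Qed.

Lemma convex_weights_support n (u : 'I_n -> 'I_m -> R) v w :
  convex_weights w -> (forall i, v i = \sum_j w j * u j i) ->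
  exists k (s : 'I_k -> 'I_n) w',
    ((exists j, w j = 0) -> (k < n)%N) /\ convex_coeffs (fun j => u (s j)) v w'.
Proof.
move=> [w_ge0 w1] wv; set S := [set j | w j != 0].
have sum_S (g : 'I_n -> R) : (forall j, w j = 0 -> g j = 0) ->
    \sum_j g j = \sum_(l < #|S|) g (enum_val l).
  move=> gS; rewrite -(big_enum_val g) [RHS]big_mkcond /=; apply: eq_bigr => j _.
  by rewrite inE; case: eqP => // /gS ->.
exists #|S|, enum_val, (fun l => w (enum_val l)); split; last split.
- move=> [j wj]; rewrite -[X in (_ < X)%N]card_ord -(cardsC S).
  suff : (0 < #|~: S|)%N by lia.
  by apply/card_gt0P; exists j; rewrite !inE wj eqxx.
- by move=> l; have := enum_valP l; rewrite inE lt_def => ->; exact: w_ge0.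
- split; first by rewrite -sum_S.
  by move=> i; rewrite wv (sum_S (fun j => w j * u j i)) // => j ->; rewrite mul0r.
Qed.

Lemma convex_coeffs_drop n (u : 'I_n -> 'I_m -> R) v w d :
  convex_coeffs u v w -> affine_dependence u d ->
  exists k (s : 'I_k -> 'I_n) w', (k < n)%N /\ convex_coeffs (fun j => u (s j)) v w'.
Proof.
move=> [w_gt0 [w1 wv]] dep; have [dn0 d0 _] := dep.
have [j0 dj0] := sum_eq0_exists_gt0 d0 dn0.
have w_ge0 j : 0 <= w j by exact: ltW.
have [t [wtd_ge0 wtd0]] := exists_max_step w_ge0 (ex_intro _ j0 dj0).
have [sum_shift v_shift] := affine_dependence_shift w t dep.
have cwtd : convex_weights (fun j => w j - t * d j) by split; rewrite ?sum_shift.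
have wtdv i : v i = \sum_j (w j - t * d j) * u j i by rewrite v_shift.
have [k [s [w' [kn cw']]]] := convex_weights_support cwtd wtdv.
by exists k, s, w'; split; first exact: kn.
Qed.

Lemma caratheodory_pos n (u : 'I_n -> 'I_m -> R) v w :
  convex_coeffs u v w ->
  exists k (s : 'I_k -> 'I_n), [/\ (1 <= k <= m.+1)%N,
    injective (fun j => u (s j)) & interior_point_convex_hull (fun j => u (s j)) v].
Proof.
elim/ltn_ind: n u w => n IH u w cw.
have [[d dep]|indep] := pselect (exists d, affine_dependence u d).
  have [k [s [w' [kn cw']]]] := convex_coeffs_drop cw dep.
  have [k' [s' carath]] := IH k kn _ _ cw'.
  by exists k', (fun j => s (s' j)).
exists n, id; split.
- apply/andP; split.
    case: n {IH} u w cw indep => // u w [_ [+ _]].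
    by rewrite big_ord0 => /eqP; rewrite eq_sym oner_eq0.
  by rewrite leqNgt; apply/negP => /(affine_dependence_exists u).
- move=> j k ujk; apply: contrapT => /eqP jk.
  exact/indep/(affine_dependence_of_eq jk ujk).
- exists w; split=> // w' cw'; apply: contrapT => w'w.
  exact/indep/(affine_dependence_of_coeffs cw cw' w'w).
Qed.

Lemma caratheodory n (u : 'I_n -> 'I_m -> R) v w :
  convex_weights w -> (forall i, v i = \sum_j w j * u j i) ->
  exists k (s : 'I_k -> 'I_n), [/\ (1 <= k <= m.+1)%N,
    injective (fun j => u (s j)) & interior_point_convex_hull (fun j => u (s j)) v].
Proof.
move=> cw wv; have [k [s [w' [_ cw']]]] := convex_weights_support cw wv.
have [k' [s' carath]] := caratheodory_pos cw'.
by exists k', (fun j => s (s' j)).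
Qed.

End Caratheodory.

Lemma ge0_of_quadratic_ge0 (R : realFieldType) (a b : R) : 0 <= b ->
  (forall t, 0 < t <= 1 -> 0 <= 2 * t * a + t ^+ 2 * b) -> 0 <= a.
Proof.
move=> b_ge0 quad_ge0; rewrite leNgt; apply/negP => a_lt0.
have ba_gt0 : 0 < b - a by lra.
pose t := - a / (b - a).
have t_gt0 : 0 < t by rewrite divr_gt0 // oppr_gt0.
have t_le1 : t <= 1 by rewrite ler_pdivrMr // mul1r; lra.
have := quad_ge0 t; rewrite t_gt0 t_le1 => /(_ isT).
(* at this [t] the quadratic equals [t a (b - 2a) / (b - a) < 0] *)
have -> : 2 * t * a + t ^+ 2 * b = t * (a * (b - 2 * a) / (b - a)).
  by rewrite /t; field; lra.
by rewrite pmulr_rge0 // pmulr_lge0 ?invr_gt0 //; nra.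
Qed.

Section MinimalBarycenter.
Variables (R : realFieldType) (T : Type) (m : nat) (f : T -> 'I_m -> R).

Definition barycenter n (w : 'I_n -> R) (x : 'I_n -> T) : 'I_m -> R :=
  fun i => \sum_j w j * f (x j) i.

Definition sqnorm (p : 'I_m -> R) : R := \sum_i p i ^+ 2.

Lemma sqnorm_segment (p q : 'I_m -> R) t :
  sqnorm (fun i => p i + t * (q i - p i)) =
  sqnorm p + 2 * t * (\sum_i p i * (q i - p i)) + t ^+ 2 * sqnorm (fun i => q i - p i).
Proof. by rewrite /sqnorm !mulr_sumr -!big_split /=; apply: eq_bigr => i _; ring. Qed.

Lemma sqnorm_le0 (p : 'I_m -> R) : sqnorm p <= 0 -> forall i, p i = 0.
Proof.
have sq_ge0 i : 0 <= p i ^+ 2 by exact: sqr_ge0.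
move=> p_le0 i; apply/eqP; rewrite -sqrf_eq0; apply/eqP.
apply: (@psumr_eq0P _ _ predT _ (fun i _ => sq_ge0 i)) => //.
by apply/eqP; rewrite eq_le p_le0 sumr_ge0.
Qed.

Lemma barycenter_widen n N (x : 'I_n -> T) w (x0 : T) : (n <= N)%N ->
  convex_weights w ->
  exists (y : 'I_N -> T) w', convex_weights w' /\ barycenter w' y = barycenter w x.
Proof.
move=> nN [w_ge0 w1].
pose y (j : 'I_N) := if insub (val j) is Some k then x k else x0.
pose w' (j : 'I_N) := if insub (val j) is Some k then w k else 0.
have sum_w' (g : 'I_n -> R) :
    \sum_(j < N) (if insub (val j) is Some k then g k else 0) = \sum_j g j.
  pose G k := if insub k is Some k' then g k' else 0.
  transitivity (\sum_(j < n) G j); last by apply: eq_bigr => j _; rewrite /G valK.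
  rewrite (big_ord_widen _ G nN) [RHS]big_mkcond /=.
  by apply: eq_bigr => j _; rewrite /G; case: insubP => [k -> _|/negPf ->].
exists y, w'; split; first split.
- by move=> j; rewrite /w'; case: insub.
- by rewrite -w1 -sum_w'.
- apply: funext => i; rewrite /barycenter -sum_w'.
  by apply: eq_bigr => j _; rewrite /w' /y; case: insub => //; rewrite mul0r.
Qed.

Lemma barycenter_segment (xs : 'I_m.+1 -> T) ls x t :
  convex_weights ls -> 0 <= t <= 1 ->
  exists (ys : 'I_m.+1 -> T) ks, convex_weights ks /\
    barycenter ks ys =
      (fun i => barycenter ls xs i + t * (f x i - barycenter ls xs i)).
Proof.
move=> [ls_ge0 ls1] /andP[t_ge0 t_le1]; set p := barycenter ls xs.
pose xx (j : 'I_m.+2) := if (j < m.+1)%N then xs (inord j) else x.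
pose ww (j : 'I_m.+2) := if (j < m.+1)%N then (1 - t) * ls (inord j) else t.
have sum_ww (F : 'I_m.+2 -> R) : \sum_j ww j * F j =
    (1 - t) * \sum_(j < m.+1) ls j * F (widen_ord (leqnSn _) j) + t * F ord_max.
  rewrite big_ord_recr /= /ww ltnn mulr_sumr; congr (_ + _).
  by apply: eq_bigr => j _; rewrite /= ltn_ord inord_val mulrA.
have cww : convex_weights ww.
  split; first by move=> j; rewrite /ww; case: ifP => _; rewrite ?mulr_ge0 ?subr_ge0.
  transitivity (\sum_j ww j * 1); first by apply: eq_bigr => j _; rewrite mulr1.
  by rewrite sum_ww; under eq_bigr do rewrite mulr1; rewrite ls1; ring.
have wwv i : p i + t * (f x i - p i) = \sum_j ww j * f (xx j) i.
  rewrite (sum_ww (fun j => f (xx j) i)) /xx /= ltnn /p /barycenter.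
  by under [X in _ = _ * X + _]eq_bigr do rewrite ltn_ord inord_val; ring.
have [k [s [/andP[_ km] _ [lam [[lam_gt0 [lam1 lamv]] _]]]]] :=
  caratheodory (u := fun j i => f (xx j) i) cww wwv.
have [ys [ks [cks ksE]]] := barycenter_widen (fun j => xx (s j)) x km
  (conj (fun j => ltW (lam_gt0 j)) lam1).
by exists ys, ks; split=> //; rewrite ksE; apply: funext => i; rewrite [RHS]lamv.
Qed.

Lemma min_sqnorm_barycenter_le (xs : 'I_m.+1 -> T) ls :
  convex_weights ls ->
  (forall (ys : 'I_m.+1 -> T) ks, convex_weights ks ->
     sqnorm (barycenter ls xs) <= sqnorm (barycenter ks ys)) ->
  forall x, sqnorm (barycenter ls xs) <= \sum_i barycenter ls xs i * f x i.
Proof.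
move=> cls ls_min x; set p := barycenter ls xs.
suff : 0 <= \sum_i p i * (f x i - p i).
  have -> : sqnorm p = \sum_i p i * p i by apply: eq_bigr => i _; rewrite expr2.
  by under eq_bigr do rewrite mulrBr; rewrite sumrB subr_ge0.
apply: (@ge0_of_quadratic_ge0 _ _ (sqnorm (fun i => f x i - p i))).
  by apply: sumr_ge0 => i _; exact: sqr_ge0.
move=> t /andP[t_gt0 t_le1].
have t01 : 0 <= t <= 1 by rewrite ltW.
have [ys [ks [cks ksE]]] := barycenter_segment xs x cls t01.
by have := ls_min ys ks cks; rewrite ksE sqnorm_segment; lra.
Qed.

End MinimalBarycenter.

Local Open Scope classical_set_scope.

Section DiracSum.
Context d (T : measurableType d) (R : realType).
Variables (c : nat -> {nonneg R}) (p : nat -> T) (N : nat).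
Let dirac_sum := msum (fun k => mscale (c k) (\d_(p k))) N.

Lemma dirac_sum_setT : dirac_sum setT = (\sum_(k < N) (c k)%:num)%:E.
Proof.
rewrite /dirac_sum /msum /mscale /= -sumEFin; apply: eq_bigr => k _.
by rewrite -[RHS]mule1; congr (_ * _)%E; exact: diracT.
Qed.

Lemma integral_dirac_sum (g : T -> R) : measurable_fun setT g ->
  (\int[dirac_sum]_(x in setT) (g x)%:E = (\sum_(k < N) (c k)%:num * g (p k))%:E)%E.
Proof.
move=> mg; have mgE : measurable_fun [set: T] (fun x => (g x)%:E).
  exact/measurable_EFinP.
have integral_mscale_dirac (h : T -> \bar R) : measurable_fun setT h ->
    (forall x, 0 <= h x)%E -> forall k,
    (\int[mscale (c k) (\d_(p k))]_x h x = ((c k)%:num)%:E * h (p k))%E.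
  move=> mh h_ge0 k; rewrite ge0_integral_mscale //; congr (_ * _)%E.
  by rewrite integral_dirac // -[RHS]mul1e; congr (_ * _)%E; exact: diracT.
have posE := integral_mscale_dirac _ (measurable_funepos mgE)
  (fun x => ltac:(by rewrite funeposE le_max lexx orbT)).
have negE := integral_mscale_dirac _ (measurable_funeneg mgE)
  (fun x => ltac:(by rewrite funenegE le_max lexx orbT)).
rewrite integralE !ge0_integral_measure_sum //;
  [|exact: measurable_funeneg|exact: measurable_funepos].
under eq_bigr do rewrite posE funeposE -EFin_max -EFinM.
under [X in (_ - X)%E]eq_bigr do rewrite negE funenegE -EFinN -EFin_max -EFinM.
rewrite !sumEFin -EFinB -sumrB; congr EFin; apply: eq_bigr => k _.
rewrite -mulrBr; congr (_ * _).
by rewrite !maxEle; case: leP => ?; case: leP => ?; lra.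
Qed.

End DiracSum.

Lemma continuous_borel_measurable (R : realType) (X : ptopologicalType) (f : X -> R) :
  continuous f -> measurable_fun [set: borelType X] (f : borelType X -> R).
Proof.
move=> /continuousP f_cont.
apply: (measurability _ (RGenOpens.measurableE R)) => _ [_ [a [b ->] <-]].
by rewrite setTI; apply: sub_sigma_algebra; exact/f_cont/interval_open.
Qed.

Lemma moment_set_of_convex_coeffs (R : realType) (X : ptopologicalType) m
    (phi : 'I_m -> X -> R) (phi_cont : forall i, continuous (phi i)) n
    (x : 'I_n -> X) (lam : 'I_n -> R) :
  (1 <= n)%N -> convex_coeffs (fun j i => phi i (x j)) (fun _ => 0) lam ->
  moment_set phi !=set0.
Proof.
case: n x lam => [//|n] x lam _ [lam_gt0 [lam1 lamv]].
have c_ge0 k : 0 <= if (k < n.+1)%N then lam (inord k) else 0.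
  by case: ifP => // _; exact: ltW.
pose c k : {nonneg R} := NngNum (c_ge0 k).
have cE (k : 'I_n.+1) : (c k)%:num = lam k by rewrite /= ltn_ord inord_val.
pose p k : borelType X := x (inord k).
exists (msum (fun k => mscale (c k) (\d_(p k))) n.+1); split.
- apply: eq_trans (dirac_sum_setT c p n.+1) _; rewrite -lam1; congr EFin.
  by apply: eq_bigr => k _; exact: cE.
- move=> i; have phi_meas := continuous_borel_measurable (phi_cont i).
  rewrite (integral_dirac_sum c p n.+1 phi_meas).
  by congr EFin; rewrite [RHS](lamv i); apply: eq_bigr => k _; rewrite cE /p inord_val.
Qed.

Section MinimalBarycenterExists.
Import function_spaces.ArrowAsProduct.

Lemma exists_min_sqnorm_barycenter (R : realType) (X : ptopologicalType)
    (hX : compact [set: X]) m n (f : X -> 'I_m -> R)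
    (f_cont : forall i, continuous (fun x => f x i)) :
  exists (xs : 'I_n.+1 -> X) ls, convex_weights ls /\
    forall (ys : 'I_n.+1 -> X) ks, convex_weights ks ->
      sqnorm (barycenter f ls xs) <= sqnorm (barycenter f ks ys).
Proof.
pose Z := forall j : 'I_n.+1, (X * R)%type.
have cont_sum (F : 'I__ -> Z -> R) :
    (forall j, continuous (F j)) -> continuous (fun z => \sum_j F j z).
  by move=> F_cont; exact: (continuous_big add_continuous (fun j _ => F_cont j)).
have cont_fst j : continuous (fun z : Z => (z j).1).
  move=> z; apply: (@continuous_comp _ _ _ (fun z : Z => z j) fst z).
    exact: proj_continuous.
  exact: cvg_fst.
have cont_snd j : continuous (fun z : Z => (z j).2).
  move=> z; apply: (@continuous_comp _ _ _ (fun z : Z => z j) snd z).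
    exact: proj_continuous.
  exact: cvg_snd.
have weight_sum_cont : continuous (fun z : Z => \sum_j (z j).2).
  exact: cont_sum.
pose simplex : set Z := [set z | forall j, (setT `*` `[0, 1]) (z j)] `&`
  (fun z => \sum_j (z j).2) @^-1` [set 1].
have simplex_compact : compact simplex.
  apply: compact_closedI.
    apply: (@tychonoff _ (fun _ => (X * R)%type) (fun _ => setT `*` `[0, 1])) => j.
    by apply: compact_setX => //; exact: segment_compact.
  by apply: preimage_closed; [move=> *; exact: weight_sum_cont | exact: closed_eq].
have simplex0 : simplex !=set0.
  exists (fun j => (point, (j == ord0)%:R)); split.
    by move=> j; split => //=; rewrite in_itv /= ler0n lern1 leq_b1.
  by rewrite /= (bigD1 ord0) //= big1 ?addr0 // => j /negPf ->.
pose F (z : Z) := sqnorm (barycenter f (fun j => (z j).2) (fun j => (z j).1)).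
have bary_cont i :
    continuous (fun z : Z => barycenter f (fun j => (z j).2) (fun j => (z j).1) i).
  apply: cont_sum => j z.
  apply: (@continuousM R Z (fun z => (z j).2) (fun z => f (z j).1 i)).
    exact: cont_snd.
  exact: (continuous_comp (cont_fst j z) (f_cont i _)).
have F_cont : continuous F.
  by apply: cont_sum => i z; apply: (@continuousM R Z); exact: bary_cont.
have [z + zmin] := compact_EVT_min simplex0 simplex_compact
  (continuous_subspaceT F_cont).
rewrite inE => -[z_unit z1].
exists (fun j => (z j).1), (fun j => (z j).2); split.
  by split=> // j; have [_ /=] := z_unit j; rewrite in_itv /= => /andP[].
move=> ys ks [ks_ge0 ks1]; apply: (zmin (fun j => (ys j, ks j))).
rewrite inE; split=> //= j.
by split=> //=; rewrite in_itv /= ks_ge0 -ks1 (bigD1 j) //= lerDl sumr_ge0.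
Qed.

End MinimalBarycenterExists.

Lemma continuous_integrable (R : realType) (X : ptopologicalType)
    (hX : compact [set: X]) (mu : {measure set (borelType X) -> \bar R})
    (g : X -> R) :
  (mu setT < +oo)%E -> continuous g -> mu.-integrable setT (EFin \o g).
Proof.
move=> mu_fin g_cont; apply: measurable_bounded_integrable => //.
  exact: continuous_borel_measurable.
have [M [M_real gM]] :=
  compact_bounded (continuous_compact (continuous_subspaceT g_cont) hX).
by exists M; split=> // y My x _; apply: gM => //; exists x.
Qed.

Lemma moment_set_lower_bound (R : realType) (X : ptopologicalType)
    (hX : compact [set: X]) m (phi : 'I_m -> X -> R)
    (phi_cont : forall i, continuous (phi i)) mu (p : 'I_m -> R) (c : R) :
  moment_set phi mu -> (forall x, c <= \sum_i p i * phi i x) -> c <= 0.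
Proof.
move=> [mu1 phi_mean0] c_le; have mu_fin : (mu setT < +oo)%E by rewrite mu1 ltry.
pose g x := \sum_i p i * phi i x.
have g_cont : continuous g.
  apply: (continuous_big add_continuous) => i _ x.
  by apply: (@continuousM R X (fun _ => p i)); [exact: cvg_cst | exact: phi_cont].
have phi_int i := continuous_integrable hX mu_fin (phi_cont i).
have g_mean0 : (\int[mu]_(x in [set: borelType X]) (g x)%:E = 0)%E.
  transitivity (\int[mu]_(x in [set: borelType X])
                  (\sum_i ((p i)%:E * (phi i x)%:E)))%E.
    by apply: eq_integral => x _; rewrite /g -sumEFin.
  rewrite (@integral_sum _ _ _ mu _ measurableT _
    (fun i x => (p i)%:E * (phi i x)%:E)%E); last first.
    by move=> i; exact: (integrableZl measurableT (p i) (phi_int i)).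
  rewrite big1 // => i _.
  by rewrite (integralZl measurableT (phi_int i)) phi_mean0 mule0.
suff : (c%:E <= 0)%E by rewrite lee_fin.
rewrite -g_mean0 -[c%:E]mule1 -mu1 -integral_cst //.
apply: le_integral => //; last by move=> x _; rewrite /= lee_fin c_le.
- by have := continuous_integrable hX mu_fin (@cst_continuous _ _ c).
- by have := continuous_integrable hX mu_fin g_cont.
Qed.

Lemma moment_set_barycenter_eq0 (R : realType) (X : ptopologicalType)
    (hX : compact [set: X]) m (phi : 'I_m -> X -> R)
    (phi_cont : forall i, continuous (phi i)) :
  moment_set phi !=set0 ->
  exists (xs : 'I_m.+1 -> X) ls, convex_weights ls /\
    forall i, barycenter (fun x i => phi i x) ls xs i = 0.
Proof.
move=> [mu mu_mom].
have [xs [ls [cls ls_min]]] :=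
  exists_min_sqnorm_barycenter (f := fun x i => phi i x) hX m phi_cont.
exists xs, ls; split=> //; apply: sqnorm_le0.
apply: (moment_set_lower_bound hX phi_cont mu_mom) => x.
exact: min_sqnorm_barycenter_le cls ls_min x.
Qed.

Theorem corollary3p4 (R : realType) (X : ptopologicalType)
  (hX : compact [set: X]) (hH : hausdorff_space X)
  (m : nat) (phi : 'I_m -> X -> R) (hphi : forall i, continuous (phi i)) :
  moment_set phi !=set0 <->
  exists (n : nat) (x : 'I_n -> X),
    [/\ (1 <= n <= m.+1)%N, injective x &
        interior_point_convex_hull (fun j i => phi i (x j)) (fun _ => 0)].
Proof.
split=> [/(moment_set_barycenter_eq0 hX hphi) [xs [ls [cls bary0]]]|].
  have [k [s [km inj int]]] := caratheodory (u := fun j i => phi i (xs j))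
    (v := fun _ => 0) cls (fun i => esym (bary0 i)).
  by exists k, (fun j => xs (s j)); split=> // j j' /(congr1 (fun y i => phi i y))/inj.
move=> [n [x [/andP[n_ge1 _] _ [lam [clam _]]]]].
exact: (moment_set_of_convex_coeffs hphi n_ge1 clam).
Qed.
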